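(* Let $\mathcal G=(G,f,h)$ be a network dynamical system of size $N$ with maximum out-degree $\Delta(G)$, satisfying Assumptions 1 and 2. For each $q\in[N]$ let $\phi_q\in\mathbb R^{P\times N}$ ($P<N$) satisfy $\delta_{2(\Delta(G)+1)}(\phi_q)<\sqrt2-1$. For each $q\in[N]$ let $x^q(1)$ be the time-1 state of the trajectory from a $q$-pinching initial condition and $y^q(1)=\phi_q x^q(1)$. Then for every $q\in[N]$ the convex problem $$\min_{\tilde x\in\mathbb R^N}\|\tilde x\|_1\quad\text{subject to}\quad \phi_q\tilde x=y^q(1)$$ has a unique solution $x^q_*(1)$, and $x^q_*(1)=x^q(1)$. Moreover $\operatorname{supp}(x^q(1))\setminus\{q\}=L_1(q)$ for every $q$, so the adjacency matrix is uniquely determined via $A_{ij}=1$ iff $i\neq j$ and $i\in\operatorname{supp}(x^j_*(1))$.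
   Context: Let $G$ be a directed graph on vertex set $[N]=\{1,\dots,N\}$ without self-loops, with adjacency matrix $A\in\{0,1\}^{N\times N}$, where $A_{ij}=1$ if and only if $i$ receives an edge (input) from $j$; in particular $A_{ii}=0$. The out-degree of $q\in[N]$ is $d_q=\#\{i: A_{iq}=1\}$, the maximum out-degree is $\Delta(G)=\max_{q}d_q$, and the first-level set of $q$ is $L_1(q)=\{i\in[N]: A_{iq}=1\}$. The network dynamical system $\mathcal G=(G,f,h)$ is the discrete-time system $x_i(t+1)=f_i(x_i(t))+\sum_{j=1}^N A_{ij}h_{ij}(x_i(t),x_j(t))$ for $i\in[N]$, $t=0,1,2,\dots$, where $f_i:\mathbb R\to\mathbb R$ and $h_{ij}:\mathbb R\times\mathbb R\to\mathbb R$; the state vector is $x(t)=(x_1(t),\dots,x_N(t))^T$. Assumption 1: $f_i(0)=0$ for all $i\in[N]$. Assumption 2: there is $\delta>0$ such that for all $i,j\in[N]$, $h_{ij}(0,0)=0$ and $h_{ij}(0,v)\neq 0$ for every $v$ with $0<|v|<\delta$. For $q\in[N]$, a $q$-pinching initial condition is $x^q(0)$ with $x^q_i(0)=\epsilon_q\delta_{iq}$ (Kronecker delta), where $0<|\epsilon_q|<\delta$; $x^q(t)$ denotes the resulting trajectory. For $x\in\mathbb R^N$, $\operatorname{supp}(x)=\{i: x_i\neq0\}$ and $\|x\|_0=\#\operatorname{supp}(x)$; $x$ is $s$-sparse if $\|x\|_0\le s$. The restricted isometry constant $\delta_s(\phi)$ of $\phi\in\mathbb R^{P\times N}$ is the smallest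 number such that $(1-\delta_s(\phi))\|x\|_2^2\le\|\phi x\|_2^2\le(1+\delta_s(\phi))\|x\|_2^2$ for all $s$-sparse $x\in\mathbb R^N$. *)

From HB Require Import structures.
From mathcomp Require Import all_boot all_order all_algebra.
From mathcomp Require Import all_classical all_reals.
Set Implicit Arguments. Unset Strict Implicit. Unset Printing Implicit Defensive.
Import Order.TTheory GRing.Theory Num.Theory.
Local Open Scope ring_scope.
Local Open Scope classical_set_scope.

Section Defs.
Variable R : realType.

(* Adjacency: A i j = true iff i receives an edge (input) from j. *)
Definition outdeg N (A : 'I_N -> 'I_N -> bool) (q : 'I_N) : nat := #|[set i | A i q]|.
Definition maxoutdeg N (A : 'I_N -> 'I_N -> bool) : nat := (\max_(q < N) outdeg A q)%N.
Definition L1 N (A : 'I_N -> 'I_N -> bool) (q : 'I_N) : {set 'I_N} := [set i | A i q].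

Definition nds_step N (A : 'I_N -> 'I_N -> bool) (f : 'I_N -> R -> R)
  (h : 'I_N -> 'I_N -> R -> R -> R) (x : 'cV[R]_N) : 'cV[R]_N :=
  \col_i (f i (x i 0) + \sum_(j < N) (if A i j then h i j (x i 0) (x j 0) else 0)).

Definition pinch N (q : 'I_N) (eps : R) : 'cV[R]_N :=
  \col_i (if i == q then eps else 0).

Definition supp N (x : 'cV[R]_N) : {set 'I_N} := [set i | x i 0 != 0].
Definition sparse N (s : nat) (x : 'cV[R]_N) : Prop := (#|supp x| <= s)%N.
Definition norm2sq N (x : 'cV[R]_N) : R := \sum_(i < N) (x i 0) ^+ 2.
Definition norm1 N (x : 'cV[R]_N) : R := \sum_(i < N) `|x i 0|.

Definition ric N P (s : nat) (phi : 'M[R]_(P, N)) : R :=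
  inf [set d : R | forall x : 'cV[R]_N, sparse s x ->
        (1 - d) * norm2sq x <= norm2sq (phi *m x) <= (1 + d) * norm2sq x].

Definition l1_solution N P (phi : 'M[R]_(P, N)) (y : 'cV[R]_P) (xs : 'cV[R]_N) : Prop :=
  phi *m xs = y /\ forall z : 'cV[R]_N, phi *m z = y -> norm1 xs <= norm1 z.

End Defs.

From HB Require Import structures.
From mathcomp Require Import all_boot all_order all_algebra.
From mathcomp Require Import all_classical all_reals.
From mathcomp Require Import ring lra.
Import Order.TTheory GRing.Theory Num.Theory.
Local Open Scope ring_scope.
Set Implicit Arguments. Unset Strict Implicit. Unset Printing Implicit Defensive.

(* Pinching node [q] starts the network from [eps e_q]; by Assumptions 1 and 2,
   one step later the state vanishes off [{q} U L1(q)] and is nonzero on every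
   out-neighbour of [q].  Hence [x^q(1)] is [(Delta + 1)]-sparse and its support
   minus [q] is [L1(q)], so the theorem reduces to Candes' exact recovery of sparse
   vectors by l1 minimisation when [delta_2s < sqrt 2 - 1].
   For the latter, let [h] be in the null space of [phi] with
   [|h_{T^c}|_1 <= |h_T|_1] for an [s]-set [T].  Sort [T^c] by decreasing [|h_i|]
   and cut it into blocks [T_0, T_1, ...] of size [s]; each [|h_{T_(k+1)}|_2] is
   at most [|h_{T_k}|_1 / sqrt s], so the tail blocks have total l2 norm at most
   [|h_T|_2].  Since [phi h = 0], the RIP applied to [h_{T u T_0}] against each
   tail block gives [(1 - d) |h_{T u T_0}|^2 <= sqrt 2 d |h_{T u T_0}|^2]; for
   [d < sqrt 2 - 1] this forces [h_{T u T_0} = 0], hence [h_T = 0] and [h = 0]. *)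

Section Euclidean.
Variable R : realType.
Implicit Types (n : nat) (c : R).

Definition dot n (u v : 'cV[R]_n) : R := \sum_i u i 0 * v i 0.
Definition norm2 n (u : 'cV[R]_n) : R := Num.sqrt (norm2sq u).

Lemma norm2sq_ge0 n (u : 'cV[R]_n) : 0 <= norm2sq u.
Proof. by apply: sumr_ge0 => i _; exact: sqr_ge0. Qed.

Lemma norm2sq_dot n (u : 'cV[R]_n) : norm2sq u = dot u u.
Proof. by apply: eq_bigr => i _; rewrite expr2. Qed.

Lemma dotC n (u v : 'cV[R]_n) : dot u v = dot v u.
Proof. by apply: eq_bigr => i _; rewrite mulrC. Qed.

Lemma dotDl n (u v w : 'cV[R]_n) : dot (u + v) w = dot u w + dot v w.
Proof. by rewrite /dot -big_split; apply: eq_bigr => i _; rewrite mxE mulrDl. Qed.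

Lemma dotZl n c (u v : 'cV[R]_n) : dot (c *: u) v = c * dot u v.
Proof. by rewrite /dot mulr_sumr; apply: eq_bigr => i _; rewrite mxE mulrA. Qed.

Lemma dotNl n (u v : 'cV[R]_n) : dot (- u) v = - dot u v.
Proof. by rewrite -scaleN1r dotZl mulN1r. Qed.

Lemma dotDr n (u v w : 'cV[R]_n) : dot w (u + v) = dot w u + dot w v.
Proof. by rewrite !(dotC w) dotDl. Qed.

Lemma dotZr n c (u v : 'cV[R]_n) : dot v (c *: u) = c * dot v u.
Proof. by rewrite !(dotC v) dotZl. Qed.

Lemma dotNr n (u v : 'cV[R]_n) : dot v (- u) = - dot v u.
Proof. by rewrite !(dotC v) dotNl. Qed.

Lemma dot_sumr n (I : finType) (F : I -> 'cV[R]_n) w :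
  dot w (\sum_i F i) = \sum_i dot w (F i).
Proof.
by rewrite /dot exchange_big /=; apply: eq_bigr => j _; rewrite summxE mulr_sumr.
Qed.

Lemma norm2sqD n (u v : 'cV[R]_n) :
  norm2sq (u + v) = norm2sq u + 2 * dot u v + norm2sq v.
Proof. by rewrite !norm2sq_dot dotDl !dotDr (dotC v u); ring. Qed.

Lemma norm2sq_lin n b c (u v : 'cV[R]_n) :
  norm2sq (b *: u + c *: v) = b ^+ 2 * norm2sq u + 2 * b * c * dot u v + c ^+ 2 * norm2sq v.
Proof. by rewrite norm2sqD !norm2sq_dot !dotZl !dotZr; ring. Qed.

Lemma norm2sqN n (u : 'cV[R]_n) : norm2sq (- u) = norm2sq u.
Proof. by apply: eq_bigr => i _; rewrite mxE sqrrN. Qed.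

Lemma norm2sq_eq0 n (u : 'cV[R]_n) : norm2sq u = 0 -> u = 0.
Proof.
move=> /eqP; rewrite psumr_eq0 => [/allP u0|i _]; last exact: sqr_ge0.
apply/matrixP => i j; rewrite (ord1 j) mxE.
by have := u0 i (mem_index_enum _); rewrite /= sqrf_eq0 => /eqP.
Qed.

Lemma norm2_ge0 n (u : 'cV[R]_n) : 0 <= norm2 u.
Proof. exact: sqrtr_ge0. Qed.

Lemma norm2_sqr n (u : 'cV[R]_n) : norm2 u ^+ 2 = norm2sq u.
Proof. by rewrite sqr_sqrtr // norm2sq_ge0. Qed.

Lemma norm2_eq0 n (u : 'cV[R]_n) : norm2 u = 0 -> u = 0.
Proof. by move=> u0; apply: norm2sq_eq0; rewrite -norm2_sqr u0 expr0n. Qed.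

Lemma norm2N n (u : 'cV[R]_n) : norm2 (- u) = norm2 u.
Proof. by rewrite /norm2 norm2sqN. Qed.

Lemma norm2_sqr_orthD n (u v : 'cV[R]_n) : dot u v = 0 ->
  norm2 (u + v) ^+ 2 = norm2 u ^+ 2 + norm2 v ^+ 2.
Proof. by move=> uv0; rewrite !norm2_sqr norm2sqD uv0 mulr0 addr0. Qed.

Lemma norm2_le_orthD n (u v : 'cV[R]_n) : dot u v = 0 -> norm2 u <= norm2 (u + v).
Proof.
move=> uv0; rewrite -ler_sqr ?nnegrE ?norm2_ge0 //.
by rewrite norm2_sqr_orthD // lerDl sqr_ge0.
Qed.

Lemma norm2_orthD n (u v : 'cV[R]_n) : dot u v = 0 ->
  norm2 u + norm2 v <= Num.sqrt 2 * norm2 (u + v).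
Proof.
move=> uv0; have s2 : Num.sqrt (2 : R) ^+ 2 = 2 by rewrite sqr_sqrtr // ler0n.
rewrite -ler_sqr ?nnegrE ?addr_ge0 ?mulr_ge0 ?norm2_ge0 ?sqrtr_ge0 //.
rewrite exprMn s2 norm2_sqr_orthD //; have := sqr_ge0 (norm2 u - norm2 v); lra.
Qed.

(* Cauchy-Schwarz against the all-ones vector: expand [sum_i (c g_i - G)^2 >= 0]
   with [c = #|S|] and [G = sum_i g_i]. *)
Lemma sqr_sum_le (I : finType) (S : {pred I}) (g : I -> R) :
  (\sum_(i in S) g i) ^+ 2 <= #|S|%:R * \sum_(i in S) g i ^+ 2.
Proof.
have [/card0_eq S0|S_gt0] := posnP #|S|.
  by rewrite !big_pred0 // expr0n mulr0.
set c : R := #|S|%:R; set G := \sum_(i in S) g i.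
have expand : \sum_(i in S) (c * g i - G) ^+ 2 = c * (c * \sum_(i in S) g i ^+ 2 - G ^+ 2).
  rewrite (eq_bigr (fun i => c ^+ 2 * g i ^+ 2 - 2 * c * G * g i + G ^+ 2)); last first.
    by move=> i _; ring.
  rewrite big_split sumrB /= -!mulr_sumr sumr_const -/G -mulr_natl -/c; ring.
have : 0 <= \sum_(i in S) (c * g i - G) ^+ 2 by apply: sumr_ge0 => i _; exact: sqr_ge0.
by rewrite expand pmulr_rge0 ?subr_ge0 // ltr0n.
Qed.

End Euclidean.

Section RestrictedIsometry.
Variable R : realType.
Variables (N P s : nat) (phi : 'M[R]_(P, N)).

Definition rip (d : R) : Prop := forall x : 'cV[R]_N, sparse s x ->
  (1 - d) * norm2sq x <= norm2sq (phi *m x) <= (1 + d) * norm2sq x.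

Lemma rip_le d d' : d <= d' -> rip d -> rip d'.
Proof.
move=> le_dd' rip_d x sx; have /andP[lo hi] := rip_d x sx.
by have := norm2sq_ge0 x => x_ge0; apply/andP; split; nra.
Qed.

Lemma norm2sq_mulmx_le (x : 'cV[R]_N) :
  norm2sq (phi *m x) <= N%:R * (\sum_p \sum_i phi p i ^+ 2) * norm2sq x.
Proof.
rewrite /norm2sq -mulrA mulr_suml mulr_sumr; apply: ler_sum => p _.
have sumT (F : 'I_N -> R) : \sum_(i in [set: 'I_N]) F i = \sum_i F i.
  by apply: eq_bigl => i; rewrite inE.
have := sqr_sum_le [set: 'I_N] (fun i => phi p i * x i 0).
rewrite cardsT card_ord !sumT mxE => /le_trans; apply; apply: ler_wpM2l; first exact: ler0n.
rewrite mulr_sumr; apply: ler_sum => i _; rewrite exprMn.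
apply: ler_wpM2r; first exact: sqr_ge0.
by rewrite (bigD1 i) //= lerDl; apply: sumr_ge0 => k _; exact: sqr_ge0.
Qed.

(* The infimum defining [ric] need not be attained, and the admissible constant
   below [c] given by [inf_lt] may be negative, so we clamp it at [0]. *)
Lemma ric_lt_rip c : 0 < c -> ric s phi < c ->
  exists d, [/\ 0 <= d, d < c & rip d].
Proof.
move=> c_gt0 ric_c.
set C := N%:R * \sum_p \sum_i phi p i ^+ 2.
have C_ge0 : 0 <= C.
  by rewrite mulr_ge0 ?ler0n //; do 2!apply: sumr_ge0 => ? _; exact: sqr_ge0.
have rip_C : rip (C + 1).
  move=> x _; have := norm2sq_mulmx_le x; rewrite -/C => bound.
  have := norm2sq_ge0 x; have := norm2sq_ge0 (phi *m x) => *.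
  by apply/andP; split; nra.
have [y rip_y y_c] := inf_lt (ex_intro _ _ rip_C) ric_c.
exists (Num.max y 0); split; first by rewrite le_max lexx orbT.
  by rewrite gt_max y_c c_gt0.
by apply: rip_le rip_y; rewrite le_max lexx.
Qed.

Lemma supp_lin b c (u v : 'cV[R]_N) :
  supp (b *: u + c *: v) \subset supp u :|: supp v.
Proof.
apply/fintype.subsetP => i; rewrite !inE !mxE; apply: contraR.
by rewrite negb_or !negbK => /andP[/eqP -> /eqP ->]; rewrite !mulr0 addr0.
Qed.

(* Polarization: apply the RIP to [b u + a v] and [b u - a v], where
   [a = |u|] and [b = |v|]; by orthogonality both have squared norm [2 a^2 b^2]. *)
Lemma rip_dot_le d (u v : 'cV[R]_N) : rip d -> dot u v = 0 ->
  (#|supp u :|: supp v| <= s)%N -> dot (phi *m u) (phi *m v) <= d * norm2 u * norm2 v.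
Proof.
move=> rip_d uv0 sp_uv.
have [a0|a_neq0] := eqVneq (norm2 u) 0.
  rewrite a0 (norm2_eq0 a0) mulmx0 mulr0 mul0r /dot big1 // => i _.
  by rewrite mxE mul0r.
have [b0|b_neq0] := eqVneq (norm2 v) 0.
  rewrite b0 (norm2_eq0 b0) mulmx0 mulr0 /dot big1 // => i _.
  by rewrite [X in _ * X]mxE mulr0.
set a := norm2 u in a_neq0 *; set b := norm2 v in b_neq0 *.
have a_gt0 : 0 < a by rewrite lt_neqAle eq_sym a_neq0 norm2_ge0.
have b_gt0 : 0 < b by rewrite lt_neqAle eq_sym b_neq0 norm2_ge0.
have rip_lin c : (1 - d) * norm2sq (b *: u + c *: v) <= norm2sq (phi *m (b *: u + c *: v))
    <= (1 + d) * norm2sq (b *: u + c *: v).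
  apply: rip_d; exact: leq_trans (subset_leq_card (supp_lin _ _ _ _)) sp_uv.
have /andP[_ hi] := rip_lin a; have /andP[lo _] := rip_lin (- a).
rewrite mulmxDr -!scalemxAr !norm2sq_lin uv0 -!norm2_sqr -/a -/b in hi.
rewrite mulmxDr -!scalemxAr !norm2sq_lin uv0 -!norm2_sqr -/a -/b in lo.
have ab_gt0 : 0 < a * b by rewrite mulr_gt0.
rewrite -(ler_pM2l ab_gt0); nra.
Qed.

Lemma rip_dot_orth d (u v : 'cV[R]_N) : rip d -> dot u v = 0 ->
  (#|supp u :|: supp v| <= s)%N -> `|dot (phi *m u) (phi *m v)| <= d * norm2 u * norm2 v.
Proof.
move=> rip_d uv0 sp_uv; rewrite ler_norml rip_dot_le // andbT lerNl.
have suppN : supp (- v) = supp v by apply/setP => i; rewrite !inE mxE oppr_eq0.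
rewrite -dotNr -mulmxN -(norm2N v).
by apply: rip_dot_le; rewrite ?dotNr ?uv0 ?oppr0 ?suppN.
Qed.

End RestrictedIsometry.

Section Restriction.
Variables (R : realType) (N : nat).
Implicit Types (S T : {set 'I_N}) (u v : 'cV[R]_N).

Lemma sparse_supp_setD1 (x : 'cV[R]_N) (q : 'I_N) (k : nat) :
  (#|supp x :\ q| <= k)%N -> sparse k.+1 x.
Proof.
by rewrite /sparse (cardsD1 q (supp x)) -add1n => ?; apply: leq_add => //; case: (_ \in _).
Qed.

Definition restr S u : 'cV[R]_N := \col_i (if i \in S then u i 0 else 0).

Lemma restr_supp S u : supp (restr S u) \subset S.
Proof. by apply/fintype.subsetP => i; rewrite inE mxE; case: (i \in S); rewrite ?eqxx. Qed.

Lemma card_supp_restrU S T u v :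
  (#|supp (restr S u) :|: supp (restr T v)| <= #|S| + #|T|)%N.
Proof.
apply: leq_trans (leq_card_setU _ _) _.
by apply: leq_add; apply: subset_leq_card; exact: restr_supp.
Qed.

Lemma dot_restr_disjoint S T u v : [disjoint S & T] -> dot (restr S u) (restr T v) = 0.
Proof.
move=> dST; rewrite /dot big1 // => i _; rewrite !mxE.
by case: (boolP (i \in S)) => iS; rewrite ?mul0r // (disjointFr dST iS) mulr0.
Qed.

Lemma restr_setC T u : restr T u + restr (~: T) u = u.
Proof.
by apply/matrixP => i j; rewrite (ord1 j) !mxE inE; case: (i \in T); rewrite ?addr0 ?add0r.
Qed.

Lemma norm2sq_restr S u : norm2sq (restr S u) = \sum_(i in S) `|u i 0| ^+ 2.
Proof.
rewrite /norm2sq [RHS]big_mkcond; apply: eq_bigr => i _; rewrite mxE.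
by case: (i \in S); rewrite ?real_normK ?num_real // expr0n.
Qed.

Lemma restr_eq0 S u i : restr S u = 0 -> i \in S -> u i 0 = 0.
Proof. by move=> /matrixP /(_ i 0); rewrite !mxE => + iS; rewrite iS. Qed.

End Restriction.

Section Blocks.
Variables (R : realType) (N s : nat) (U : {set 'I_N}) (a : 'I_N -> R).
Hypothesis s_gt0 : (0 < s)%N.

Definition enum_decr : seq 'I_N := sort (fun i j => a j <= a i) (enum U).

Definition block_of (i : 'I_N) : nat := (index i enum_decr %/ s)%N.

Definition block (k : nat) : {set 'I_N} := [set i in U | block_of i == k].

Lemma enum_decr_uniq : uniq enum_decr.
Proof. by rewrite sort_uniq enum_uniq. Qed.

Lemma mem_enum_decr i : (i \in enum_decr) = (i \in U).
Proof. by rewrite mem_sort mem_enum. Qed.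

Lemma index_enum_decr_inj : {in U &, injective (index^~ enum_decr)}.
Proof.
move=> i j iU jU eij.
by rewrite -(nth_index i (_ : i \in enum_decr)) ?eij ?nth_index ?mem_enum_decr.
Qed.

Lemma block_ofP k i :
  (block_of i == k) = (k * s <= index i enum_decr < k.+1 * s)%N.
Proof. by rewrite eqn_leq -ltnS leq_divRL // ltn_divLR // andbC. Qed.

Lemma block_of_lt i : (block_of i < N.+1)%N.
Proof.
rewrite ltnS (leq_trans (leq_div _ _)) // (leq_trans (index_size _ _)) //.
by rewrite size_sort -cardE -[X in (_ <= X)%N](card_ord N) max_card.
Qed.

Lemma block_subset k : block k \subset U.
Proof. by apply/fintype.subsetP => i; rewrite inE => /andP[]. Qed.

Lemma disjoint_block k k' : k != k' -> [disjoint block k & block k'].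
Proof.
move=> kk'; rewrite -finset.setI_eq0; apply/eqP/setP => i; rewrite !inE.
by case: eqP => [->|]; rewrite ?(negbTE kk') ?andbF.
Qed.

Lemma card_block_le k : (#|block k| <= s)%N.
Proof.
rewrite cardE -(size_map (index^~ enum_decr)) -(size_iota (k * s) s).
apply: uniq_leq_size.
  rewrite map_inj_in_uniq ?enum_uniq // => i j; rewrite !mem_enum !inE.
  by move=> /andP[iU _] /andP[jU _]; exact: index_enum_decr_inj.
move=> m /mapP[i]; rewrite mem_enum inE => /andP[_]; rewrite block_ofP => bi ->.
by rewrite mem_iota addnC -mulSn.
Qed.

Lemma card_block_full k i : i \in block k.+1 -> #|block k| = s.
Proof.
rewrite inE block_ofP => /andP[iU /andP[ki _]].
have i_lt : (index i enum_decr < size enum_decr)%N by rewrite index_mem mem_enum_decr.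
apply/eqP; rewrite eqn_leq card_block_le /=.
rewrite cardE -(size_iota (k * s) s) -(size_map (nth i enum_decr)).
have m_lt m : m \in iota (k * s) s -> (m < size enum_decr)%N.
  rewrite mem_iota addnC -mulSn => /andP[_ /leq_trans]; apply.
  exact: leq_trans ki (ltnW i_lt).
apply: uniq_leq_size.
  rewrite map_inj_in_uniq ?iota_uniq // => m m' /m_lt m_lt' /m_lt m_lt'' e.
  by apply/eqP; rewrite -(nth_uniq i m_lt' m_lt'' enum_decr_uniq) e.
move=> j /mapP[m m_in ->]; rewrite mem_enum inE -mem_enum_decr mem_nth ?m_lt //=.
by rewrite block_ofP index_uniq ?m_lt ?enum_decr_uniq // mulSn addnC -mem_iota.
Qed.

Lemma block_le k i j : i \in block k.+1 -> j \in block k -> a i <= a j.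
Proof.
rewrite !inE !block_ofP => /andP[iU /andP[ki _]] /andP[jU /andP[_ jk]].
have [i_in j_in] : i \in enum_decr /\ j \in enum_decr by rewrite !mem_enum_decr.
rewrite -(nth_index i i_in) -(nth_index i j_in).
apply: (sorted_ltn_nth (leT := fun i j => a j <= a i)).
- by move=> y x z /= yx zy; exact: le_trans zy yx.
- by apply: sort_sorted => x y; exact: le_total.
- by rewrite inE index_mem.
- by rewrite inE index_mem.
- exact: leq_trans jk ki.
Qed.

Lemma sum_blocks (F : 'I_N -> R) :
  \sum_(k < N.+1) \sum_(i in block k) F i = \sum_(i in U) F i.
Proof.
rewrite (partition_big (fun i => Ordinal (block_of_lt i)) predT) //=.
apply: eq_bigr => k _; apply: eq_bigl => i; rewrite inE.
by congr (_ && _); apply/eqP/eqP => [<-|/(congr1 val) <-] //; apply: val_inj.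
Qed.

Lemma sum_restr_blocks (u : 'cV[R]_N) :
  \sum_(k < N.+1) restr (block k) u = restr U u.
Proof.
apply/matrixP => i j; rewrite (ord1 j) summxE mxE.
under eq_bigr do rewrite mxE.
case: (boolP (i \in U)) => iU; last by rewrite big1 // => k _; rewrite inE (negbTE iU).
rewrite (bigD1 (Ordinal (block_of_lt i))) //= inE iU eqxx big1 ?addr0 // => k nk.
by rewrite inE iU; case: eqP => // e; case/eqP: nk; apply: val_inj.
Qed.

(* Every entry of block [k+1] is at most the mean of block [k], which is full. *)
Lemma block_sqr_sum_le k : (forall i, 0 <= a i) ->
  s%:R * \sum_(i in block k.+1) a i ^+ 2 <= (\sum_(j in block k) a j) ^+ 2.
Proof.
move=> a_ge0.
have [->|[i0 i0B]] := set_0Vmem (block k.+1); first by rewrite big_set0 mulr0 sqr_ge0.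
set L := \sum_(j in block k) a j.
have L_ge0 : 0 <= L by apply: sumr_ge0.
have s_gt0R : 0 < (s%:R : R) by rewrite ltr0n.
have sa_le i : i \in block k.+1 -> s%:R * a i <= L.
  move=> iB; rewrite -(card_block_full i0B) mulr_natl -sumr_const.
  by apply: ler_sum => j jB; exact: block_le iB jB.
rewrite -(ler_pM2l s_gt0R) mulrA -expr2 mulr_sumr.
apply: (@le_trans _ _ (\sum_(i in block k.+1) L ^+ 2)).
  apply: ler_sum => i iB; rewrite -exprMn ler_sqr ?nnegrE ?sa_le //.
  by rewrite mulr_ge0 ?ler0n.
rewrite sumr_const -[L ^+ 2 *+ _]mulr_natl; apply: ler_wpM2r; first exact: sqr_ge0.
by rewrite ler_nat card_block_le.
Qed.

End Blocks.

Section TailBounds.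
Variables (R : realType) (N s : nat).
Hypothesis s_gt0 : (0 < s)%N.
Implicit Types (T U : {set 'I_N}) (h : 'cV[R]_N).

Definition abs_entries h (i : 'I_N) : R := `|h i 0|.

Lemma sum_abs_le_norm2_restr T h :
  \sum_(i in T) `|h i 0| <= Num.sqrt #|T|%:R * norm2 (restr T h).
Proof.
rewrite /norm2 -sqrtrM ?ler0n // norm2sq_restr.
rewrite -(ger0_norm (sumr_ge0 _ (fun i _ => normr_ge0 (h i 0)))) -sqrtr_sqr.
by rewrite ler_wsqrtr // sqr_sum_le.
Qed.

Lemma sum_norm2_blocks_le U h :
  Num.sqrt s%:R * \sum_(k < N) norm2 (restr (block s U (abs_entries h) k.+1) h)
    <= \sum_(i in U) `|h i 0|.
Proof.
have block_le k : Num.sqrt s%:R * norm2 (restr (block s U (abs_entries h) k.+1) h)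
    <= \sum_(i in block s U (abs_entries h) k) `|h i 0|.
  rewrite /norm2 -sqrtrM ?ler0n // norm2sq_restr.
  rewrite -(ger0_norm (sumr_ge0 _ (fun i _ => normr_ge0 (h i 0)))) -sqrtr_sqr.
  by rewrite ler_wsqrtr // (block_sqr_sum_le U s_gt0) // => i; exact: normr_ge0.
rewrite -(sum_blocks s U (abs_entries h)) big_ord_recr /= mulr_sumr.
apply: (@le_trans _ _ (\sum_(k < N) \sum_(i in block s U (abs_entries h) k) `|h i 0|)).
  by apply: ler_sum => k _; exact: block_le.
by rewrite lerDl; apply: sumr_ge0 => i _; exact: normr_ge0.
Qed.

Lemma sum_norm2_tail_le T h : (#|T| <= s)%N ->
  \sum_(i in ~: T) `|h i 0| <= \sum_(i in T) `|h i 0| ->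
  \sum_(k < N) norm2 (restr (block s (~: T) (abs_entries h) k.+1) h) <= norm2 (restr T h).
Proof.
move=> card_T cone.
have sqrt_s_gt0 : 0 < Num.sqrt (s%:R : R) by rewrite sqrtr_gt0 ltr0n.
rewrite -(ler_pM2l sqrt_s_gt0).
apply: le_trans (sum_norm2_blocks_le _ _) _; apply: le_trans cone _.
apply: le_trans (sum_abs_le_norm2_restr _ _) _.
by rewrite ler_wpM2r ?norm2_ge0 // ler_wsqrtr // ler_nat.
Qed.

End TailBounds.

Section NullSpaceProperty.
Variables (R : realType) (N P : nat) (phi : 'M[R]_(P, N)) (d : R).

Lemma rip_head_tail_le s K (u v : 'cV[R]_N) (w : 'I_K -> 'cV[R]_N) :
  rip s phi d -> phi *m (u + v + \sum_k w k) = 0 ->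
  (forall k, dot u (w k) = 0) -> (forall k, dot v (w k) = 0) ->
  (forall k, #|supp u :|: supp (w k)| <= s)%N ->
  (forall k, #|supp v :|: supp (w k)| <= s)%N ->
  norm2sq (phi *m (u + v)) <= d * (norm2 u + norm2 v) * \sum_k norm2 (w k).
Proof.
move=> rip_d phi0 uw vw sp_uw sp_vw.
have phi_uv : phi *m (u + v) = - \sum_k phi *m w k.
  by apply/eqP; rewrite -addr_eq0 -mulmx_sumr -mulmxDr phi0.
rewrite norm2sq_dot {2}phi_uv dotNr dot_sumr -sumrN mulr_sumr; apply: ler_sum => k _.
rewrite mulmxDr dotDl opprD mulrDr mulrDl.
have := rip_dot_orth rip_d (uw k) (sp_uw k); have := rip_dot_orth rip_d (vw k) (sp_vw k).
by rewrite !ler_norml => /andP[vk _] /andP[uk _]; lra.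
Qed.

Lemma cone_restr_eq0 (T : {set 'I_N}) (h : 'cV[R]_N) :
  \sum_(i in ~: T) `|h i 0| <= \sum_(i in T) `|h i 0| -> restr T h = 0 -> h = 0.
Proof.
move=> cone hT0.
have head0 : \sum_(i in T) `|h i 0| = 0.
  by apply: big1 => i iT; rewrite (restr_eq0 hT0 iT) normr0.
have tail0 : \sum_(i in ~: T) `|h i 0| = 0.
  by apply/le_anti; rewrite -{2}head0 cone sumr_ge0 // => i _; exact: normr_ge0.
apply/matrixP => i j; rewrite (ord1 j) mxE; case: (boolP (i \in T)) => iT.
  exact: restr_eq0 hT0 iT.
apply/normr0_eq0; apply: (psumr_eq0P _ tail0); first by move=> k _; exact: normr_ge0.
by rewrite inE.
Qed.

Lemma rip_cone_head_le s (T : {set 'I_N}) (h : 'cV[R]_N) :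
  (0 < s)%N -> 0 <= d -> rip (2 * s) phi d -> (#|T| <= s)%N ->
  \sum_(i in ~: T) `|h i 0| <= \sum_(i in T) `|h i 0| -> phi *m h = 0 ->
  let h01 := restr T h + restr (block s (~: T) (abs_entries h) 0) h in
  (1 - d) * norm2 h01 ^+ 2 <= d * Num.sqrt 2 * norm2 h01 ^+ 2.
Proof.
move=> s_gt0 d_ge0 rip_d card_T cone phi_h.
pose B k := block s (~: T) (abs_entries h) k.
pose h0 := restr T h; pose h1 := restr (B 0%N) h; pose w (k : 'I_N) := restr (B k.+1) h.
have card_B k : (#|B k| <= s)%N by exact: card_block_le.
have disj_TB k : [disjoint T & B k] by rewrite disjoint_sym finset.disjoints_subset block_subset.
have sp2 (S S' : {set 'I_N}) : (#|S| <= s)%N -> (#|S'| <= s)%N ->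
    (#|supp (restr S h) :|: supp (restr S' h)| <= 2 * s)%N.
  by move=> cS cS'; apply: leq_trans (card_supp_restrU _ _ _ _) _; rewrite mul2n -addnn leq_add.
have head : norm2sq (phi *m (h0 + h1)) <= d * (norm2 h0 + norm2 h1) * \sum_k norm2 (w k).
  apply: rip_head_tail_le rip_d _ _ _ _ _ => [|k|k|k|k].
  - rewrite -addrA.
    have -> : h1 + \sum_k w k = \sum_(k < N.+1) restr (B k) h by rewrite big_ord_recl.
    by rewrite /B sum_restr_blocks restr_setC.
  - exact: dot_restr_disjoint (disj_TB _).
  - exact: dot_restr_disjoint (disjoint_block _ _ _ _).
  - exact: sp2 card_T (card_B _).
  - exact: sp2 (card_B _) (card_B _).
have lower : (1 - d) * norm2 (h0 + h1) ^+ 2 <= norm2sq (phi *m (h0 + h1)).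
  have sp01 : sparse (2 * s) (h0 + h1).
    rewrite /sparse -(scale1r h0) -(scale1r h1).
    exact: leq_trans (subset_leq_card (supp_lin _ _ _ _)) (sp2 _ _ card_T (card_B 0%N)).
  by rewrite norm2_sqr; have /andP[] := rip_d _ sp01.
have h01_orth : dot h0 h1 = 0 := dot_restr_disjoint h h (disj_TB 0%N).
have tail : \sum_k norm2 (w k) <= norm2 h0 := sum_norm2_tail_le s_gt0 card_T cone.
apply: le_trans lower (le_trans head _).
have -> : d * Num.sqrt 2 * norm2 (h0 + h1) ^+ 2
    = d * (Num.sqrt 2 * norm2 (h0 + h1)) * norm2 (h0 + h1) by rewrite expr2; ring.
apply: ler_pM.
- by rewrite mulr_ge0 // addr_ge0 ?norm2_ge0.
- by apply: sumr_ge0 => k _; exact: norm2_ge0.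
- by apply: ler_wpM2l => //; exact: norm2_orthD.
- exact: le_trans tail (norm2_le_orthD h01_orth).
Qed.

Lemma rip_null_space_property s (T : {set 'I_N}) (h : 'cV[R]_N) :
  (0 < s)%N -> 0 <= d -> d < Num.sqrt 2 - 1 -> rip (2 * s) phi d -> (#|T| <= s)%N ->
  \sum_(i in ~: T) `|h i 0| <= \sum_(i in T) `|h i 0| -> phi *m h = 0 -> h = 0.
Proof.
move=> s_gt0 d_ge0 d_lt rip_d card_T cone phi_h.
have /= key := rip_cone_head_le s_gt0 d_ge0 rip_d card_T cone phi_h.
set r := norm2 _ in key.
have gap : 0 < 1 - d - d * Num.sqrt 2.
  have s2 : Num.sqrt (2 : R) ^+ 2 = 2 by rewrite sqr_sqrtr // ler0n.
  have := sqrtr_ge0 (2 : R); nra.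
have r0 : r = 0.
  have : (1 - d - d * Num.sqrt 2) * r ^+ 2 <= 0 by lra.
  rewrite pmulr_rle0 // => r2_le0.
  by apply/eqP; rewrite -sqrf_eq0 eq_le r2_le0 sqr_ge0.
apply: (cone_restr_eq0 cone); apply: norm2_eq0; apply/le_anti; rewrite norm2_ge0 andbT -r0.
apply: norm2_le_orthD; apply: dot_restr_disjoint.
by rewrite disjoint_sym finset.disjoints_subset block_subset.
Qed.

End NullSpaceProperty.

Section L1Recovery.
Variables (R : realType) (N P s : nat) (phi : 'M[R]_(P, N)) (d : R).
Hypotheses (s_gt0 : (0 < s)%N) (d_ge0 : 0 <= d) (d_lt : d < Num.sqrt 2 - 1).
Hypothesis rip_d : rip (2 * s) phi d.

Lemma l1_cone (x h : 'cV[R]_N) : norm1 (x + h) <= norm1 x ->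
  \sum_(i in ~: supp x) `|h i 0| <= \sum_(i in supp x) `|h i 0|.
Proof.
have split_supp (y : 'cV[R]_N) :
    norm1 y = \sum_(i in supp x) `|y i 0| + \sum_(i in ~: supp x) `|y i 0|.
  rewrite /norm1 (bigID (mem (supp x))) /=; congr (_ + _).
  by apply: eq_bigl => i; rewrite !inE.
have off_supp : \sum_(i in ~: supp x) `|(x + h) i 0| = \sum_(i in ~: supp x) `|h i 0|.
  by apply: eq_bigr => i; rewrite !inE negbK mxE => /eqP ->; rewrite add0r.
have on_supp : \sum_(i in supp x) `|x i 0| - \sum_(i in supp x) `|h i 0|
    <= \sum_(i in supp x) `|(x + h) i 0|.
  by rewrite -sumrB; apply: ler_sum => i _; rewrite mxE lerB_normD.
have x_off : \sum_(i in ~: supp x) `|x i 0| = 0.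
  by apply: big1 => i; rewrite !inE negbK => /eqP ->; rewrite normr0.
rewrite (split_supp (x + h)) (split_supp x) off_supp x_off; lra.
Qed.

Lemma rip_l1_recovery (x z : 'cV[R]_N) : sparse s x ->
  phi *m z = phi *m x -> norm1 z <= norm1 x -> z = x.
Proof.
move=> sp_x phi_zx z_le; apply/eqP; rewrite -subr_eq0; apply/eqP.
apply: (rip_null_space_property s_gt0 d_ge0 d_lt rip_d sp_x).
  by apply: l1_cone; rewrite addrC subrK.
by rewrite mulmxBr phi_zx subrr.
Qed.

Lemma l1_solution_sparseP (x z : 'cV[R]_N) : sparse s x ->
  l1_solution phi (phi *m x) z <-> z = x.
Proof.
move=> sp_x; split => [[phi_z z_min]|->]; first exact: rip_l1_recovery phi_z (z_min x erefl).
split=> // z' phi_z'; rewrite leNgt; apply/negP => z'_lt.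
by move: (z'_lt); rewrite (rip_l1_recovery sp_x phi_z' (ltW z'_lt)) ltxx.
Qed.

End L1Recovery.

Section PinchedStep.
Variables (R : realType) (N : nat) (A : 'I_N -> 'I_N -> bool).
Variables (f : 'I_N -> R -> R) (h : 'I_N -> 'I_N -> R -> R -> R).
Hypotheses (f0 : forall i, f i 0 = 0) (h00 : forall i j, h i j 0 0 = 0).

Lemma nds_step_pinch_neq (q i : 'I_N) (e : R) : i != q ->
  nds_step A f h (pinch q e) i 0 = if A i q then h i q 0 e else 0.
Proof.
move=> iq; rewrite mxE !mxE (negbTE iq) f0 add0r (bigD1 q) //= !mxE eqxx.
by rewrite big1 ?addr0 // => j jq; rewrite !mxE (negbTE jq) h00 if_same.
Qed.

Lemma supp_nds_step_pinch (q : 'I_N) (e : R) :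
  (forall i, A i i = false) -> (forall i, h i q 0 e != 0) ->
  supp (nds_step A f h (pinch q e)) :\ q = L1 A q.
Proof.
move=> A_irr h_neq0; apply/setP => i; rewrite !inE.
have [->|iq] := eqVneq i q; first by rewrite A_irr.
by rewrite nds_step_pinch_neq //; case: (A i q); rewrite ?h_neq0 ?eqxx.
Qed.

(* [outdeg] counts a classical set while [L1] is a finset. *)
Lemma card_L1_le (q : 'I_N) : (#|L1 A q| <= maxoutdeg A)%N.
Proof.
apply: leq_trans (leq_bigmax q); apply/eq_leq/eq_card => i.
by rewrite inE; apply/idP/idP => Aiq; [rewrite in_setE | rewrite in_setE in Aiq].
Qed.

End PinchedStep.

Unset Implicit Arguments. Set Strict Implicit. Set Printing Implicit Defensive.

Theorem mainTheorem4 (R : realType) (N P : nat)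
  (A : 'I_N -> 'I_N -> bool) (f : 'I_N -> R -> R) (h : 'I_N -> 'I_N -> R -> R -> R)
  (delta : R) (eps : 'I_N -> R) (phi : 'I_N -> 'M[R]_(P, N)) :
  (forall i : 'I_N, A i i = false) ->
  (forall i : 'I_N, f i 0 = 0) ->
  0 < delta ->
  (forall i j : 'I_N, h i j 0 0 = 0 /\ (forall v : R, 0 < `|v| < delta -> h i j 0 v != 0)) ->
  (forall q : 'I_N, 0 < `|eps q| < delta) ->
  (P < N)%N ->
  (forall q : 'I_N, ric (2 * (maxoutdeg A).+1) (phi q) < Num.sqrt 2 - 1) ->
  let x1 := fun q : 'I_N => nds_step A f h (pinch q (eps q)) in
  let y1 := fun q : 'I_N => phi q *m x1 q in
  (forall q : 'I_N, forall z : 'cV[R]_N, l1_solution (phi q) (y1 q) z <-> z = x1 q) /\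
  (forall q : 'I_N, supp (x1 q) :\ q = L1 A q) /\
  (forall i j : 'I_N, forall xs : 'cV[R]_N, l1_solution (phi j) (y1 j) xs ->
     (A i j <-> i != j /\ i \in supp xs)).
Proof.
(* [P < N] only makes the recovery problem nontrivial. *)
move=> A_irr f0 _ h_ok eps_ok _ ric_lt x1 y1.
have h00 i j : h i j 0 0 = 0 by case: (h_ok i j).
have supp_x1 q : supp (x1 q) :\ q = L1 A q.
  apply: (supp_nds_step_pinch f0 h00 A_irr) => i.
  by case: (h_ok i q) => _; apply; exact: eps_ok.
have sol q z : l1_solution (phi q) (y1 q) z <-> z = x1 q.
  have c_gt0 : 0 < Num.sqrt (2 : R) - 1.
    by rewrite subr_gt0 -[X in X < _]sqrtr1 ltr_sqrt ?ltr1n.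
  have [d [d_ge0 d_lt rip_d]] := ric_lt_rip c_gt0 (ric_lt q).
  have sp_x1 : sparse (maxoutdeg A).+1 (x1 q).
    by apply: (sparse_supp_setD1 (q := q)); rewrite supp_x1 card_L1_le.
  exact: l1_solution_sparseP (ltn0Sn _) d_ge0 d_lt rip_d _ _ sp_x1.
split; first exact: sol.
split; first exact: supp_x1.
move=> i j xs /sol ->; have /setP/(_ i) := supp_x1 j; rewrite !inE => e.
by split => [Aij|[ij iS]]; [move: e; rewrite Aij => /andP[] | rewrite -e ij iS].
Qed.
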